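(* Let $0<p<1$ and let $L<U$ be integers with $U-L\ge 4$. With the notation of the context, for every integer $x\in[L,U]$ the limit $m(x)=\lim_{k\to\infty}m_k(x)$ exists (and is finite), where $m_k(x)=\mathbb{E}\tau^x_k$.
   Context: Let $\xi_1,\xi_2,\dots$ be i.i.d. random variables with values in $\{1,-1\}$, $\mathbb{P}(\xi_i=1)=p$, $\mathbb{P}(\xi_i=-1)=q:=1-p$. Define $X_k=-1$ if $\xi_k=-1$; $X_k=2$ if $\xi_k=\xi_{k-1}=1$ (for $k\ge 2$); and $X_k=1$ otherwise (in particular $X_1=1$ when $\xi_1=1$). Let $S_0=0$, $S_k=X_1+\dots+X_k$, and $S^x_k=x+S_k$. For $k\ge 0$ let $\tau^x_k=\min\{l\in\{0,\dots,k\}: S^x_l\le L \text{ or } S^x_l\ge U\}$ if this set is nonempty, and $\tau^x_k=k$ otherwise. *)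

From HB Require Import structures.
From mathcomp Require Import all_boot all_order all_algebra.
From mathcomp Require Import all_classical all_reals all_analysis.
Set Implicit Arguments. Unset Strict Implicit. Unset Printing Implicit Defensive.
Import Order.TTheory GRing.Theory Num.Theory.
Local Open Scope ring_scope.

(* An outcome is w : nat -> bool; w i = true encodes xi_{i+1} = 1,
   w i = false encodes xi_{i+1} = -1 (0-based indices). *)

Definition Xval (w : nat -> bool) (i : nat) : int :=
  if w i then (if (0 < i)%N && w i.-1 then 2 else 1) else -1.

Definition Ssum (w : nat -> bool) (l : nat) : int := \sum_(i < l) Xval w i.

Definition exited (L U x : int) (w : nat -> bool) (l : nat) : bool :=
  (x + Ssum w l <= L) || (U <= x + Ssum w l).

Definition tau (L U x : int) (k : nat) (w : nat -> bool) : nat :=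
  minn (find (exited L U x w) (iota 0 k.+1)) k.

(* extend a finite outcome (xi_1..xi_k) to an infinite one (irrelevant tail) *)
Definition ext (k : nat) (f : {ffun 'I_k -> bool}) (i : nat) : bool :=
  if insub i is Some j then f j else false.

Definition weight (R : realType) (p : R) (k : nat) (f : {ffun 'I_k -> bool}) : R :=
  \prod_(i < k) (if f i then p else 1 - p).

(* m_k(x) = E tau^x_k  (tau^x_k depends only on xi_1..xi_k) *)
Definition m_k (R : realType) (p : R) (L U x : int) (k : nat) : R :=
  \sum_(f : {ffun 'I_k -> bool}) weight p f * (tau L U x k (ext f))%:R.

From HB Require Import structures.
From mathcomp Require Import all_boot all_order all_algebra.
From mathcomp Require Import all_classical all_reals all_analysis.
From mathcomp Require Import zify lra.
Import Order.TTheory GRing.Theory Num.Theory.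
Import numFieldNormedType.Exports.
Local Open Scope classical_set_scope.
Local Open Scope ring_scope.

(* Since tau^x_{k+1} = tau^x_k + [no exit at times 0..k], m_k(x) is the k-th
   partial sum of the survival probabilities s_j = P(no exit at times 0..j).
   Every success moves the walk up by at least 1, so from any position inside
   (L, U) a run of n >= U - L successes forces an exit; conditioning on the
   first k coins gives s_{k+n} <= (1 - p^n) s_k.  Such blockwise geometric decay
   of nonnegative terms bounds the nondecreasing partial sums, which therefore
   converge. *)

Lemma is_cvg_series_block_contraction (R : realType) (d : R ^nat) (n : nat) (c : R) :
  c < 1 -> (forall k, 0 <= d k) -> (forall k, d (k + n)%N <= c * d k) ->
  cvgn (series d).
Proof.
move=> c_lt1 d_ge0 d_contr.
have series_nd : nondecreasing_seq (series d).
  by apply/nondecreasing_seqP => k; rewrite seriesSr lerDl.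
have series_shift K : series d (K + n)%N <= series d n + c * series d K.
  elim: K => [|K IH].
    by rewrite [series d 0]/series /= big_geq // mulr0 addr0.
  by rewrite addSn !seriesSr mulrDr addrA lerD.
apply: nondecreasing_is_cvgn => //.
exists (series d n / (1 - c)) => _ [K _ <-].
rewrite ler_pdivlMr ?subr_gt0 //.
have := le_trans (series_nd _ _ (leq_addr n K)) (series_shift K).
lra.
Qed.

Definition upd (w : nat -> bool) (k : nat) (b : bool) : nat -> bool :=
  fun i => if i == k then b else w i.

Definition depends_on_first {T : Type} (k : nat) (g : (nat -> bool) -> T) :=
  forall w w', (forall i, (i < k)%N -> w i = w' i) -> g w = g w'.

Lemma upd_depends_on_first {T : Type} {k} {g : (nat -> bool) -> T} j b :
  depends_on_first k g -> (k <= j)%N -> forall w, g (upd w j b) = g w.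
Proof. by move=> gk kj w; apply: gk => i ik; rewrite /upd ltn_eqF // (leq_trans ik). Qed.

Lemma ext_ord k (f : {ffun 'I_k -> bool}) (j : 'I_k) : ext f j = f j.
Proof. by rewrite /ext valK. Qed.

Lemma ext_ge k (f : {ffun 'I_k -> bool}) i : (k <= i)%N -> ext f i = false.
Proof. by move=> ki; rewrite /ext insubN // -leqNgt. Qed.

Definition ffun_snoc {k} (f : {ffun 'I_k -> bool}) (b : bool) : {ffun 'I_k.+1 -> bool} :=
  [ffun i : 'I_k.+1 => upd (ext f) k b i].

Lemma ffun_snoc_widen k (f : {ffun 'I_k -> bool}) b (j : 'I_k) :
  ffun_snoc f b (widen_ord (leqnSn k) j) = f j.
Proof. by rewrite ffunE /upd (ltn_eqF (ltn_ord j)); exact: ext_ord. Qed.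

Lemma ffun_snoc_max k (f : {ffun 'I_k -> bool}) b : ffun_snoc f b ord_max = b.
Proof. by rewrite ffunE /upd eqxx. Qed.

Lemma ext_snoc k (f : {ffun 'I_k -> bool}) b : ext (ffun_snoc f b) = upd (ext f) k b.
Proof.
apply: funext => i; have [ik|ki] := ltnP i k.+1.
  by rewrite -[i]/(nat_of_ord (Ordinal ik)) ext_ord ffunE.
by rewrite /upd gtn_eqF // !ext_ge // ltnW.
Qed.

Lemma ffun_snoc_bij k :
  bijective (fun fb : {ffun 'I_k -> bool} * bool => ffun_snoc fb.1 fb.2).
Proof.
exists (fun g : {ffun 'I_k.+1 -> bool} =>
  ([ffun j => g (widen_ord (leqnSn k) j)], g ord_max)).
  case=> f b /=; rewrite ffun_snoc_max; congr (_, _).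
  by apply/ffunP => j; rewrite ffunE ffun_snoc_widen.
move=> g; apply/ffunP => i; rewrite ffunE /upd.
case: eqP => [ik|/eqP ik]; first by congr (g _); apply: val_inj.
have ilt : (i < k)%N by rewrite ltn_neqAle ik -ltnS ltn_ord.
rewrite -[nat_of_ord i]/(nat_of_ord (Ordinal ilt)) ext_ord ffunE.
by congr (g _); apply: val_inj.
Qed.

Section CoinExpectation.
Context {R : realType} (p : R).

(* Expectation of [g] under the first [k] coins; [ext] sets the later coins to
   [false], so this is the true expectation only when [g] depends on the first
   [k] coins. *)
Definition coin_expect (k : nat) (g : (nat -> bool) -> R) : R :=
  \sum_(f : {ffun 'I_k -> bool}) weight p f * g (ext f).

Lemma eq_coin_expect k g1 g2 : g1 =1 g2 -> coin_expect k g1 = coin_expect k g2.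
Proof. by move=> g12; apply: eq_bigr => f _; rewrite g12. Qed.

Lemma weight_snoc k (f : {ffun 'I_k -> bool}) b :
  weight p (ffun_snoc f b) = weight p f * (if b then p else 1 - p).
Proof.
rewrite /weight big_ord_recr /= ffun_snoc_max.
by congr (_ * _); apply: eq_bigr => i _; rewrite ffun_snoc_widen.
Qed.

Lemma coin_expectS k g :
  coin_expect k.+1 g =
  p * coin_expect k (fun w => g (upd w k true)) +
  (1 - p) * coin_expect k (fun w => g (upd w k false)).
Proof.
rewrite /coin_expect (reindex _ (onW_bij _ (ffun_snoc_bij k))) /=.
rewrite -(pair_big xpredT xpredT
  (fun f b => weight p (ffun_snoc f b) * g (ext (ffun_snoc f b)))) /=.
rewrite !big_distrr -big_split /=; apply: eq_bigr => f _.
by rewrite big_bool /= !weight_snoc !ext_snoc !mulrA ![_ * p]mulrC ![_ * (1 - p)]mulrC.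
Qed.

Lemma coin_expect0 g : coin_expect 0 g = g (fun _ => false).
Proof.
rewrite /coin_expect (eq_bigr (fun _ => g (fun _ => false))).
  by rewrite sumr_const card_ffun card_ord expn0.
move=> f _; rewrite /weight big_ord0 mul1r.
by congr g; apply: funext => i; rewrite ext_ge.
Qed.

Lemma coin_expect_widen {k k' g} :
  depends_on_first k g -> (k <= k')%N -> coin_expect k' g = coin_expect k g.
Proof.
move=> gk /subnK <-; elim: (k' - k)%N => [|j IH] //.
have upd_irrelevant b :
    coin_expect (j + k) (fun w => g (upd w (j + k) b)) = coin_expect (j + k) g.
  exact/eq_coin_expect/(upd_depends_on_first _ b gk (leq_addl j k)).
by rewrite addSn coin_expectS !upd_irrelevant IH -mulrDl addrC subrK mul1r.
Qed.

Lemma coin_expect_cst k c : coin_expect k (fun _ => c) = c.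
Proof. by rewrite (@coin_expect_widen 0) ?coin_expect0. Qed.

Lemma coin_expectD k g1 g2 :
  coin_expect k (fun w => g1 w + g2 w) = coin_expect k g1 + coin_expect k g2.
Proof. by rewrite /coin_expect -big_split; apply: eq_bigr => f _; rewrite mulrDr. Qed.

Lemma coin_expectZ k c g :
  coin_expect k (fun w => c * g w) = c * coin_expect k g.
Proof. by rewrite /coin_expect big_distrr; apply: eq_bigr => f _; rewrite mulrCA. Qed.

Lemma coin_expect_run k n h : depends_on_first k h ->
  coin_expect (k + n) (fun w => h w * (all w (iota k n))%:R) =
  p ^+ n * coin_expect k h.
Proof.
move=> hk; elim: n => [|n IH].
  by rewrite addn0 expr0 mul1r; apply: eq_bigr => f _; rewrite mulr1.
have upd_run b w : all (upd w (k + n) b) (iota k n.+1) = all w (iota k n) && b.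
  rewrite -addn1 iotaD all_cat /= /upd eqxx andbT; congr andb.
  by apply: eq_in_all => i; rewrite mem_iota => /andP[_ ilt]; rewrite ltn_eqF.
have run_true : coin_expect (k + n)
    (fun w => h (upd w (k + n) true) * (all (upd w (k + n) true) (iota k n.+1))%:R) =
    coin_expect (k + n) (fun w => h w * (all w (iota k n))%:R).
  apply: eq_coin_expect => w.
  by rewrite upd_run andbT (upd_depends_on_first _ _ hk (leq_addr n k)).
have run_false : coin_expect (k + n)
    (fun w => h (upd w (k + n) false) * (all (upd w (k + n) false) (iota k n.+1))%:R) = 0.
  by rewrite /coin_expect big1 // => f _; rewrite upd_run andbF !mulr0.
by rewrite addnS coin_expectS run_true run_false mulr0 addr0 IH exprS mulrA.
Qed.

Hypotheses (p_ge0 : 0 <= p) (p_le1 : p <= 1).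

Lemma ler_coin_expect k g1 g2 :
  (forall w, g1 w <= g2 w) -> coin_expect k g1 <= coin_expect k g2.
Proof.
move=> g12; apply: ler_sum => f _; apply: ler_wpM2l => //.
by apply: prodr_ge0 => i _; case: (f i); rewrite ?subr_ge0.
Qed.

End CoinExpectation.

Section Survival.
Variables (L U x : int).

Lemma Ssum_depends_on_first l : depends_on_first l (fun w => Ssum w l).
Proof.
move=> w w' ww'; apply: eq_bigr => i _; rewrite /Xval ww' //.
case: (w' i) => //; case: (posnP i) => [-> //|i_gt0] /=.
by rewrite ww' // (leq_ltn_trans (leq_pred i)).
Qed.

Definition survives (w : nat -> bool) (k : nat) : bool :=
  ~~ has (exited L U x w) (iota 0 k.+1).

Lemma survives_depends_on_first k : depends_on_first k (fun w => survives w k).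
Proof.
move=> w w' ww'; congr negb; apply: eq_in_has => l; rewrite mem_iota => /andP[_ lk].
rewrite /exited (Ssum_depends_on_first l w w') // => i il.
by apply: ww'; lia.
Qed.

Lemma survivesW {j k w} : (j <= k)%N -> survives w k -> survives w j.
Proof.
move=> jk; apply: contra => /hasP[l]; rewrite !mem_iota !add0n => /andP[_ lj] exl.
by apply/hasP; exists l; rewrite // mem_iota (leq_trans lj).
Qed.

Lemma tauS k w : tau L U x k.+1 w = (tau L U x k w + survives w k)%N.
Proof.
rewrite /tau /survives -addn1 iotaD find_cat add0n.
set P := exited L U x w; set s := iota 0 k.+1.
have size_s : size s = k.+1 by rewrite size_iota.
case: (boolP (has P s)) => ex.
  by move: (ex); rewrite has_find size_s addn0; lia.
by rewrite (hasNfind ex) size_s; lia.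
Qed.

Lemma tau_depends_on_first k : depends_on_first k (tau L U x k).
Proof.
elim: k => [|k IH] w w' ww'; first by rewrite /tau !minn0.
have ww'_k i : (i < k)%N -> w i = w' i by move=> ik; apply: ww'; rewrite ltnS ltnW.
by rewrite !tauS (IH w w' ww'_k) (survives_depends_on_first k w w' ww'_k).
Qed.

Lemma Ssum_run k n w : all w (iota k n) -> Ssum w k + n%:Z <= Ssum w (k + n).
Proof.
move=> /allP run; rewrite /Ssum -!(big_mkord xpredT) (big_cat_nat _ (leq_addr n k)) //=.
rewrite lerD2l; apply: (@le_trans _ _ (\sum_(k <= i < k + n) (1 : int))).
  by rewrite sumr_const_nat addKn natz.
apply: ler_sum_nat => i /andP[ki ikn].
by rewrite /Xval run ?mem_iota ?ki ?(leq_trans ikn) //=; case: ifP.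
Qed.

Lemma survives_no_run {k n w} :
  U - L <= n%:Z -> survives w (k + n) -> ~~ all w (iota k n).
Proof.
move=> n_ge /[dup] /(survivesW (leq_addr n k)) sk skn; apply/negP => /Ssum_run.
have inside l : survives w l -> L < x + Ssum w l < U.
  move=> /hasPn /(_ l); rewrite mem_iota leqnn /= => /(_ isT).
  by rewrite /exited negb_or -!ltNge => /andP[-> ->].
move: (inside _ sk) (inside _ skn); lia.
Qed.

End Survival.

Section SurvivalProbability.
Context {R : realType} (p : R) (L U x : int).

Definition survival (k : nat) : R :=
  coin_expect p k (fun w => (survives L U x w k)%:R).

Lemma m_kE k : m_k p L U x k = coin_expect p k (fun w => (tau L U x k w)%:R).
Proof. by []. Qed.

Lemma survives_indicator_depends_on_first k :
  depends_on_first k (fun w => (survives L U x w k)%:R : R).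
Proof. by move=> w w' /(survives_depends_on_first L U x k) ->. Qed.

Lemma m_k_series : m_k p L U x = series survival.
Proof.
apply: funext; elim=> [|k IH].
  by rewrite m_kE coin_expect0 /tau minn0 /series /= big_geq.
rewrite seriesSr -IH !m_kE.
rewrite (@eq_coin_expect _ p k.+1 _
  (fun w => (tau L U x k w)%:R + (survives L U x w k)%:R)).
  have tau_k : depends_on_first k (fun w => (tau L U x k w)%:R : R).
    by move=> w w' /(tau_depends_on_first L U x k) ->.
  rewrite coin_expectD !(coin_expect_widen p _ (leqnSn k)) //.
  exact: survives_indicator_depends_on_first.
by move=> w; rewrite tauS natrD.
Qed.

Hypotheses (p_ge0 : 0 <= p) (p_le1 : p <= 1).

Lemma survival_ge0 k : 0 <= survival k.
Proof.
by rewrite -(coin_expect_cst p k 0); apply: ler_coin_expect => // w; case: survives.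
Qed.

Lemma survival_contraction k n :
  U - L <= n%:Z -> survival (k + n) <= (1 - p ^+ n) * survival k.
Proof.
move=> n_ge; set s := fun w => (survives L U x w k)%:R : R.
have survives_le w :
    (survives L U x w (k + n))%:R <= s w + -1 * (s w * (all w (iota k n))%:R).
  rewrite /s; case: (boolP (survives L U x w (k + n))) => [skn|_].
    rewrite (survivesW L U x (leq_addr n k) skn).
    by rewrite (negbTE (survives_no_run L U x n_ge skn)) !mulr0 addr0.
  by case: (survives L U x w k); case: (all w (iota k n)); rewrite /=; lra.
apply: le_trans (ler_coin_expect _ p_ge0 p_le1 _ _ _ survives_le) _.
rewrite coin_expectD coin_expectZ coin_expect_run;
  last exact: survives_indicator_depends_on_first.
rewrite (coin_expect_widen p (survives_indicator_depends_on_first k) (leq_addr n k)).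
by rewrite mulrBl mul1r mulN1r.
Qed.

End SurvivalProbability.

Theorem theorem3p2 (R : realType) (p : R) (L U x : int) :
  0 < p -> p < 1 -> L < U -> 4 <= U - L -> L <= x -> x <= U ->
  exists l : R, (fun k : nat => m_k p L U x k) @ \oo --> l.
Proof.
move=> p_gt0 p_lt1 _ _ _ _.
have [p_ge0 p_le1] := (ltW p_gt0, ltW p_lt1).
set n := `|U - L|%N.
apply/cvg_ex; rewrite m_k_series.
apply: (@is_cvg_series_block_contraction _ _ n (1 - p ^+ n)).
- by rewrite gtrBl exprn_gt0.
- by move=> k; apply: survival_ge0.
- by move=> k; apply: survival_contraction; rewrite // /n abszE ler_norm.
Qed.
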